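(* Given a parity game with $d$ priorities, $n$ vertices and $m$ edges, searching for tangles in the top-down $\alpha$-maximal decomposition (i.e. applying extract-tangles, defined in the context, to each region of the decomposition) runs in time $O(dm)$.
   Context: Parity games: $\mathcal{G}=(V_0,V_1,E,\mathrm{pr})$, $V=V_0\cup V_1$ finite, partitioned into vertices of Even ($0$) and Odd ($1$); $E\subseteq V\times V$ with every vertex having a successor; $\mathrm{pr}:V\to\{0,\dots,d\}$. $E(u)=\{v:(u,v)\in E\}$, $\mathrm{pr}(U)=\max_{u\in U}\mathrm{pr}(u)$, $\mathrm{pr}^{-1}(p)$ the set of vertices of priority $p$, $\overline{\alpha}=1-\alpha$. A cycle is won by $\alpha$ if its highest priority has parity $\alpha$. A strategy of $\alpha$ is a partial function $\sigma$ on $V_\alpha$ with $\sigma(v)\in E(v)$. For $U\subseteq V$, $\mathcal{G}\setminus U$ is the subgame with vertices $V\setminus U$ and edges $E\cap((V\setminus U)\times(V\setminus U))$. A $p$-tangle is a nonempty $U\subseteq V$ with $p=\mathrm{pr}(U)$ such that for $\alpha\equiv p\pmod 2$ there is a strategy $\sigma:U\cap V_\alpha\to U$ (witness strategy $\sigma_T(U)$) with $(U,E\cap(\sigma\cup((U\cap V_{\overline{\alpha}})\times U)))$ strongly connected and all its cycles won by $\alpha$. For a tangle $t$ won by $\alpha$ in a game with edge set $E$, $E_T(t)=\{v\notin t:\exists u\in t\cap V_{\overline{\alpha}},(u,v)\in E\}$; $T_\alpha$ denotes the tangles of $T$ won by $\alpha$. Tangle attractor: $\mathit{TAttr}^{\mathcal{G},T}_\alpha(A)$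 is the least $Z\supseteq A$ containing every $v\in V_\alpha$ with $E(v)\cap Z\neq\emptyset$, every $v\in V_{\overline{\alpha}}$ with $E(v)\subseteq Z$, and every vertex of every $t\in T_\alpha$ with $\emptyset\neq E_T(t)\subseteq Z$, computed together with a strategy $\sigma$ of $\alpha$ (individually attracted $\alpha$-vertices are mapped to a successor in $Z$, $\alpha$-vertices of $A$ to a successor in $Z$ once one exists, $\alpha$-vertices of an attracted tangle $t$ not yet having a strategy get $\sigma_T(t)$). Top-down $\alpha$-maximal decomposition of $\mathcal{G}$ w.r.t. a set of tangles $T$: repeatedly let $\mathcal{G}'=(V',E')$ be $\mathcal{G}$ minus all vertices in already computed regions, $p=\mathrm{pr}(\mathcal{G}')$, $\alpha=p\bmod 2$, and compute the next region $(Z,\sigma)=\mathit{TAttr}^{\mathcal{G}',T'}_\alpha(\mathrm{pr}^{-1}(p)\cap V')$ with $T'$ the tangles of $T$ inside $V'$, until every vertex lies in a region. extract-tangles$(Z,\sigma)$ for such a region: let $Y$ be the greatest $X\subseteq Z$ such that every $v\in X\cap V_{\overline{\alpha}}$ has $E'(v)\subseteq X$ and every $v\in X\cap V_\alpha$ has $\sigma(v)\in X$; let $H$ be the graph on $Y$ with edges $(v,\sigma(v))$ for $v\in Y\cap V_\alpha$ and $(v,w)\in E'$ for $v\in Y\cap V_{\overline{\alpha}}$; return all bottom strongly connected components of $H$ containing at least one edge. *)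

From mathcomp Require Import all_boot.

Set Implicit Arguments.
Unset Strict Implicit.
Unset Printing Implicit Defensive.

(* Parity games.  A game is given by a finite vertex type V, an owner map    *)
(* (owner v = false : v is a vertex of Even (player 0), owner v = true : v   *)
(* is a vertex of Odd (player 1)), an edge relation E and a priority map pr. *)
(* Players are booleans; the player of priority p is odd p.                  *)
(* Subgames are represented by their vertex set W : {set V}; the edges of    *)
(* the subgame are the edges of E with both endpoints in W.                  *)

Section ParityGames.
Variable V : finType.
Variable owner : V -> bool.
Variable E : rel V.
Variable pr : V -> nat.

Definition maxpr (U : {set V}) : nat := \max_(u in U) pr u.

Definition tangle_edge (U : {set V}) (a : bool) (s : V -> option V) : rel V :=
  fun u w => [&& u \in U, w \in U &
                 if owner u == a then (s u == Some w) && E u w else E u w].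

Definition is_tangle (U : {set V}) (s : V -> option V) : Prop :=
  let a := odd (maxpr U) in
  [/\ U != set0,
      (forall v, v \in U -> owner v = a ->
          exists2 w, s v = Some w & (w \in U) && E v w),
      (forall u w, u \in U -> w \in U -> connect (tangle_edge U a s) u w) &
      (forall c : seq V, c != [::] -> cycle (tangle_edge U a s) c ->
          odd (\max_(x <- c) pr x) = a)].

Definition tangle_escape (W t : {set V}) : {set V} :=
  let a := odd (maxpr t) in
  [set v in W | (v \notin t) &&
                [exists u in t, [&& u \in W, owner u != a & E u v]]].

Definition tattr_closed (W : {set V}) (T : seq {set V}) (a : bool)
    (A Z : {set V}) : bool :=
  [&& A \subset Z,
      [forall v in W, ((owner v == a) && [exists w in Z, (w \in W) && E v w])
                        ==> (v \in Z)],
      [forall v in W, ((owner v != a) && [forall w in W, E v w ==> (w \in Z)])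
                        ==> (v \in Z)] &
      all (fun t : {set V} => [&& t \subset W, odd (maxpr t) == a,
                        tangle_escape W t != set0 & tangle_escape W t \subset Z]
                    ==> (t \subset Z)) T].

Definition tattr (W : {set V}) (T : seq {set V}) (a : bool) (A : {set V})
    : {set V} :=
  \bigcap_(Z : {set V} | (Z \subset W) && tattr_closed W T a A Z) Z.

Definition region_strategy (W A Z : {set V}) (a : bool) (s : V -> option V)
    : Prop :=
  (forall v w, s v = Some w -> [/\ v \in Z, owner v = a, w \in Z & E v w]) /\
  (forall v, v \in Z -> owner v = a ->
     (exists w, s v = Some w) <-> (v \notin A \/ exists2 w, w \in Z & E v w)).

Record region := Region {
  rset : {set V};
  rplayer : bool;
  rstrat : V -> option V
}.

Fixpoint is_decomp_from (T : seq {set V}) (W : {set V}) (rs : seq region)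
    : Prop :=
  match rs with
  | [::] => W = set0
  | r :: rs' =>
    let p := maxpr W in
    let A := [set v in W | pr v == p] in
    let T' := [seq t <- T | (t : {set V}) \subset W] in
    [/\ W != set0, rplayer r = odd p, rset r = tattr W T' (odd p) A,
        region_strategy W A (rset r) (odd p) (rstrat r) &
        is_decomp_from T (W :\: rset r) rs']
  end.

Definition is_decomp (T : seq {set V}) (rs : seq region) : Prop :=
  is_decomp_from T setT rs.

Definition ext_ok (W Z : {set V}) (a : bool) (s : V -> option V)
    (X : {set V}) : bool :=
  (X \subset Z) &&
  [forall v in X, if owner v == a then (if s v is Some w then w \in X else false)
                  else [forall w in W, E v w ==> (w \in X)]].

Definition ext_Y (W Z : {set V}) (a : bool) (s : V -> option V) : {set V} :=
  \bigcup_(X : {set V} | ext_ok W Z a s X) X.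

Definition ext_edge (W Y : {set V}) (a : bool) (s : V -> option V) : rel V :=
  fun u w => [&& u \in Y, w \in Y &
                 if owner u == a then s u == Some w else (w \in W) && E u w].

Definition is_bottom_scc (e : rel V) (Y C : {set V}) : bool :=
  [&& C != set0, C \subset Y,
      [forall u in C, forall w in C, connect e u w],
      [forall u in C, forall w, connect e u w ==> (w \in C)] &
      [exists u in C, exists w in C, e u w]].

Definition extract_tangles (W Z : {set V}) (a : bool) (s : V -> option V)
    : {set {set V}} :=
  let Y := ext_Y W Z a s in
  [set C | is_bottom_scc (ext_edge W Y a s) Y C].

Fixpoint extract_all (W : {set V}) (rs : seq region) : seq {set {set V}} :=
  match rs with
  | [::] => [::]
  | r :: rs' => extract_tangles W (rset r) (rplayer r) (rstrat r)
                :: extract_all (W :\: rset r) rs'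
  end.

(* Cost model: the game is given by adjacency lists succs/preds; vertex sets
   are bit arrays (membership / insertion O(1)) also available as lists.
   Every elementary step is charged 1; traversing an adjacency list of
   length k is charged k (+1).  The second component of every result is
   the accumulated cost. *)

Definition succs (v : V) : seq V := [seq w <- enum V | E v w].
Definition preds (v : V) : seq V := [seq u <- enum V | E u v].
Definition nedges : nat := \sum_(v : V) size (succs v).

Definition init_bad (W Z : {set V}) (a : bool) (s : V -> option V)
    : seq V * nat :=
  foldr (fun (v : V) (acc : seq V * nat) =>
    let: (B, c) := acc in
    if owner v == a then
      (if (if s v is Some w then w \in Z else false) then (B, c.+1)
       else (v :: B, c.+1))
    else
      (if all (fun w => (w \notin W) || (w \in Z)) (succs v)
       then (B, c + (size (succs v)).+1)
       else (v :: B, c + (size (succs v)).+1)))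
  ([::], 0) (enum Z).

Fixpoint propagate (fuel : nat) (Z : {set V}) (a : bool) (s : V -> option V)
    (B : {set V}) (work : seq V) (c : nat) : {set V} * nat :=
  match fuel with
  | 0 => (B, c)
  | fuel'.+1 =>
    match work with
    | [::] => (B, c)
    | x :: work' =>
      let nw := [seq u <- preds x |
                  [&& u \in Z, u \notin B & (owner u == a) ==> (s u == Some x)]] in
      propagate fuel' Z a s (B :|: [set u in nw]) (nw ++ work')
                (c + (size (preds x)).+1)
    end
  end.

(* iterative depth-first search; post receives vertices at finishing time *)
Fixpoint dfs_loop (next : V -> seq V) (ncost : V -> nat) (fuel : nat)
    (vis : {set V}) (stk : seq (V * seq V)) (post : seq V) (c : nat)
    : {set V} * seq V * nat :=
  match fuel with
  | 0 => (vis, post, c)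
  | fuel'.+1 =>
    match stk with
    | [::] => (vis, post, c)
    | (v, [::]) :: stk' => dfs_loop next ncost fuel' vis stk' (v :: post) c.+1
    | (v, w :: ws) :: stk' =>
      if w \in vis then dfs_loop next ncost fuel' vis ((v, ws) :: stk') post c.+1
      else dfs_loop next ncost fuel' (w |: vis) ((w, next w) :: (v, ws) :: stk')
                    post (c + (ncost w).+1)
    end
  end.

Definition dfs_fuel : nat := (#|V| + nedges).*2.+2.

Definition dfs_from (next : V -> seq V) (ncost : V -> nat) (vis : {set V})
    (v : V) (post : seq V) (c : nat) : {set V} * seq V * nat :=
  dfs_loop next ncost dfs_fuel (v |: vis) [:: (v, next v)] post (c + (ncost v).+1).

(* Kosaraju, first pass: vertices by decreasing finishing time *)
Definition pass1 (next : V -> seq V) (ncost : V -> nat) (order : seq V)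
    : seq V * nat :=
  let: (_, post, c) :=
    foldl (fun (acc : {set V} * seq V * nat) (v : V) => let: (vis, post, c) := acc in
             if v \in vis then (vis, post, c.+1)
             else dfs_from next ncost vis v post c.+1)
          (set0, [::], 0) order in
  (post, c).

(* Kosaraju, second pass on the reversed graph: strongly connected components *)
Definition pass2 (rnext : V -> seq V) (rncost : V -> nat) (order : seq V)
    : seq (seq V) * nat :=
  let: (_, comps, c) :=
    foldl (fun (acc : {set V} * seq (seq V) * nat) (v : V) => let: (vis, comps, c) := acc in
             if v \in vis then (vis, comps, c.+1)
             else let: (vis', comp, c') := dfs_from rnext rncost vis v [::] c.+1 in
                  (vis', comp :: comps, c'))
          (set0, [::], 0) order in
  (comps, c).

Definition hnext (W Y : {set V}) (a : bool) (s : V -> option V) (u : V) : seq V :=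
  [seq w <- succs u | ext_edge W Y a s u w].
Definition hrnext (W Y : {set V}) (a : bool) (s : V -> option V) (x : V) : seq V :=
  [seq u <- preds x | ext_edge W Y a s u x].
Definition scost (u : V) : nat := size (succs u).
Definition pcost (u : V) : nat := size (preds u).

Definition search_region (W Z : {set V}) (a : bool) (s : V -> option V)
    : seq {set V} * nat :=
  let: (B0, c0) := init_bad W Z a s in
  let: (B, c1) := propagate #|V|.+1 Z a s [set x in B0] B0 c0 in
  let Y := Z :\: B in
  let c2 := c1 + #|Z| in
  let: (order, c3) := pass1 (hnext W Y a s) scost (enum Y) in
  let: (comps, c4) := pass2 (hrnext W Y a s) pcost order in
  let check (comp : seq V) :=
    let C := [set x in comp] in
    all (fun x => all (fun w => w \in C) (hnext W Y a s x)) comp &&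
    has (fun x => hnext W Y a s x != [::]) comp in
  let ccost := \sum_(comp <- comps) \sum_(x <- comp) (scost x).+1 in
  ([seq [set x in comp] | comp <- comps & check comp],
   c2 + c3 + c4 + ccost + #|Y|).

Fixpoint search (W : {set V}) (rs : seq region) : seq (seq {set V}) * nat :=
  match rs with
  | [::] => ([::], 1)
  | r :: rs' =>
    let: (out, c) := search_region W (rset r) (rplayer r) (rstrat r) in
    let: (outs, c') := search (W :\: rset r) rs' in
    (out :: outs, c + c' + #|rset r|.+1)
  end.

End ParityGames.

From mathcomp Require Import all_boot zify.

Set Implicit Arguments.
Unset Strict Implicit.
Unset Printing Implicit Defensive.

(* One region (Z, sigma) is searched in time O(n + m).  Y is computed from Z by
   a backward worklist: a vertex is removed when it violates the closure
   conditions or depends (through sigma for alpha, through any edge for the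
   opponent) on a removed vertex, and each removed vertex scans its
   predecessor list once.  The SCCs of H come from Kosaraju's two depth-first
   searches, whose cost is bounded by a potential counting the unvisited
   vertices and the pending adjacency entries.  An SCC is kept iff no H-edge
   leaves it and it has an edge, which characterizes the bottom SCCs with an
   edge.  As every vertex has a successor, n <= m.  Each region contains all
   vertices of the top priority of its subgame, so priorities strictly
   decrease along the decomposition and there are at most d + 1 regions. *)

Section ConnectEdges.
Variables (V : finType) (e : rel V).

Lemma connect_exit_edge (P : pred V) x y : P x -> ~~ P y -> connect e x y ->
  exists b q, [/\ P b, ~~ P q, connect e x b & e b q].
Proof.
move=> Px nPy /connectP [p]; elim: p x Px => [|z p IH] x Px /=.
  by move=> _ Hy; rewrite Hy Px in nPy.
move=> /andP [xz pz] ly; case Pz: (P z).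
  have [b [q [Pb nPq zb bq]]] := IH z Pz pz ly.
  by exists b, q; split=> //; apply: connect_trans (connect1 xz) zb.
by exists x, z; split=> //; rewrite Pz.
Qed.

Lemma connect_closed_pred (P : pred V) x y :
  (forall u w, P u -> e u w -> P w) -> P x -> connect e x y -> P y.
Proof.
move=> clP Px xy; apply/negPn/negP => nPy.
have [b [q [Pb nPq _ bq]]] := connect_exit_edge Px nPy xy.
by rewrite (clP b q Pb bq) in nPq.
Qed.

Lemma connect_first_edge x y : connect e x y -> x != y -> exists z, e x z.
Proof.
case/connectP => [[|z p]] /=; first by move=> _ ->; rewrite eqxx.
by case/andP => xz _ _ _; exists z.
Qed.

End ConnectEdges.

Section DepthFirstSearch.
Variables (V : finType) (next : V -> seq V) (ncost : V -> nat).

Local Notation reach := (connect (grel next)).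

Definition stack_nodes (stk : seq (V * seq V)) : seq V := map fst stk.
Definition visit_cost (w : V) : nat := (size (next w) + ncost w).+1.
Definition unvisited_cost (vis : {set V}) : nat := \sum_(w | w \notin vis) visit_cost w.

(* A step of [dfs_loop] either pays 1 and drops a frame or a pending successor,
   or pays [ncost w + 1] and trades [visit_cost w] for a frame with
   [size (next w)] pending successors: [c + dfs_potential vis stk] never grows. *)
Definition dfs_potential (vis : {set V}) (stk : seq (V * seq V)) : nat :=
  size stk + sumn (map (fun f => size f.2) stk) + unvisited_cost vis.

Definition reached_from : rel V := fun x y => reach y x.

Lemma reached_from_trans : transitive reached_from.
Proof. by move=> y x z /= yx zy; apply: connect_trans zy yx. Qed.

(* [K] holds the vertices visited by earlier searches, [post] the finished
   vertices (last finished first) on top of the initial list [P0], and [root]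
   is the start vertex.  [dfs_post_order] is the finishing-time property that
   Kosaraju's algorithm relies on. *)
Record dfs_inv (K : {set V}) (P0 : seq V) (root : V) (vis : {set V})
    (stk : seq (V * seq V)) (post : seq V) : Prop := {
  dfs_visE : forall x, (x \in vis) = [|| x \in K, x \in post | x \in stack_nodes stk];
  dfs_uniq : uniq (post ++ stack_nodes stk);
  dfs_oldN : forall x, x \in K -> x \notin post ++ stack_nodes stk;
  dfs_done_succ : forall b w, (b \in K) || (b \in post) -> w \in next b -> w \in vis;
  dfs_frame_succ : forall v ws, (v, ws) \in stk ->
    forall w, w \in next v -> (w \in vis) || (w \in ws);
  dfs_frame_sub : forall v ws, (v, ws) \in stk -> {subset ws <= next v};
  dfs_stack_sorted : sorted reached_from (stack_nodes stk);
  dfs_escape : forall x y, (x \in K) || (x \in post) -> y \notin K -> y \notin post ->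
    reach x y -> exists2 g, g \in stack_nodes stk & reach g x && reach x g;
  dfs_post_order : forall x v, x \in post -> v \in post -> reach x v -> ~~ reach v x ->
    exists2 z, reach x z && reach z x &
               (z \in stack_nodes stk) || (index z post < index v post);
  dfs_post_reach : forall x, x \in post -> (x \in P0) || reach root x;
  dfs_stack_reach : forall g, g \in stack_nodes stk -> reach root g
}.

Record dfs_done (K vis : {set V}) (post : seq V) : Prop := {
  done_visE : forall x, (x \in vis) = (x \in K) || (x \in post);
  done_uniq : uniq post;
  done_oldN : forall x, x \in K -> x \notin post;
  done_closed : forall x y, (x \in K) || (x \in post) -> reach x y ->
    (y \in K) || (y \in post);
  done_post_order : forall x v, x \in post -> v \in post -> reach x v -> ~~ reach v x ->
    exists2 z, reach x z && reach z x & index z post < index v post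
}.

Lemma dfs_inv_done K P0 root vis post :
  dfs_inv K P0 root vis [::] post -> dfs_done K vis post.
Proof.
move=> HI; split.
- by move=> x; rewrite (dfs_visE HI) /= in_nil orbF.
- by have := dfs_uniq HI; rewrite /= cats0.
- by move=> x Hx; have := dfs_oldN HI Hx; rewrite /= cats0.
- move=> x y Hx Hxy; apply/negPn/negP; rewrite negb_or => /andP [yK yp].
  by have [g] := dfs_escape HI Hx yK yp Hxy.
- move=> x v Hx Hv Hxv Hvx; have [z Hz] := dfs_post_order HI Hx Hv Hxv Hvx.
  by exists z.
Qed.

Section Pop.
Variables (K : {set V}) (P0 : seq V) (root u : V) (vis : {set V}).
Variables (stk : seq (V * seq V)) (post : seq V).
Hypothesis HI : dfs_inv K P0 root vis ((u, [::]) :: stk) post.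

Let stackE : stack_nodes ((u, [::]) :: stk) = u :: stack_nodes stk.
Proof. by []. Qed.

Lemma pop_notin_post : u \notin post.
Proof.
by have := dfs_uniq HI; rewrite stackE cat_uniq /= negb_or => /and3P [_ /andP [] ].
Qed.

Lemma pop_notin_old : u \notin K.
Proof.
apply/negP => uK; have := dfs_oldN HI uK.
by rewrite stackE mem_cat in_cons eqxx orbT.
Qed.

Lemma pop_reach_top q : q \in stack_nodes stk -> reach q u.
Proof.
have := dfs_stack_sorted HI; rewrite stackE /=.
by move/(order_path_min reached_from_trans)/allP; apply.
Qed.

Lemma pop_escape x y : (x \in K) || (x \in u :: post) -> y \notin K ->
  y \notin u :: post -> reach x y -> exists2 g, g \in stack_nodes stk & reach g x && reach x g.
Proof.
move=> Hx HyK Hyp Hxy.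
have nP : ~~ ((y \in K) || (y \in u :: post)) by rewrite negb_or HyK.
have [b [q [Pb nPq xb /= bq]]] :=
  connect_exit_edge (P := [pred z | (z \in K) || (z \in u :: post)]) Hx nP Hxy.
have qvis : q \in vis.
  move: Pb; rewrite !inE; case: (b =P u) => [Ebu _|_ /= Hb].
    by rewrite Ebu in bq; have := dfs_frame_succ HI (mem_head _ _) bq; rewrite orbF.
  exact: (dfs_done_succ HI Hb bq).
have qstk : q \in stack_nodes stk.
  move: nPq qvis; rewrite (dfs_visE HI) stackE !inE.
  by case: (q \in K); case: (q == u); case: (q \in post).
have xq : reach x q := connect_trans xb (connect1 bq).
move: Hx; rewrite in_cons; case: (x =P u) => [Exu _|_ /= Hx].
  by rewrite Exu in xq *; exists q => //; rewrite xq pop_reach_top.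
move: nPq; rewrite !inE !negb_or => /andP [qK /andP [_ qp]].
have [g] := dfs_escape HI Hx qK qp xq; rewrite stackE in_cons.
case: (g =P u) => [->|_ /=] Hg Hgx; last by exists g.
exists q => //; rewrite xq andbT.
by apply: connect_trans (pop_reach_top qstk) _; case/andP: Hgx.
Qed.

Lemma pop_post_order x v : x \in u :: post -> v \in u :: post -> reach x v -> ~~ reach v x ->
  exists2 z, reach x z && reach z x &
             (z \in stack_nodes stk) || (index z (u :: post) < index v (u :: post)).
Proof.
rewrite !in_cons => Hx Hv Hxv Hvx.
case: (x =P u) Hx => [Exu _|Nxu /= Hx].
  subst x; have Nvu : v != u by apply/eqP => Evu; rewrite Evu connect0 in Hvx.
  exists u; first by rewrite connect0.
  by rewrite /= eqxx eq_sym (negbTE Nvu) orbT.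
case: (v =P u) Hv => [Evu _|Nvu /= Hv].
  subst v; have Hx' : (x \in K) || (x \in post) by rewrite Hx orbT.
  have [g] := dfs_escape HI Hx' pop_notin_old pop_notin_post Hxv.
  rewrite stackE in_cons; case: (g =P u) => [->|_ /=] Hg Hgx.
    by case/andP: Hgx => H _; rewrite H in Hvx.
  by exists g; [rewrite andbC | rewrite Hg].
have [z Hz Hz'] := dfs_post_order HI Hx Hv Hxv Hvx; exists z => //.
move: Hz'; rewrite stackE in_cons /= [u == v]eq_sym (introF eqP Nvu).
case: (z =P u) => [->|Nzu] /=; first by rewrite eqxx orbT.
by rewrite [u == z]eq_sym (introF eqP Nzu).
Qed.

Lemma dfs_inv_pop : dfs_inv K P0 root vis stk (u :: post).
Proof.
have U := dfs_uniq HI; rewrite stackE in U.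
split.
- by move=> x; rewrite (dfs_visE HI) stackE !in_cons;
     case: (x \in K); case: (x == u); case: (x \in post).
- by move: (uniq_catCA post [:: u] (stack_nodes stk)); rewrite /= U => <-.
- move=> x Hx; have := dfs_oldN HI Hx; rewrite stackE !mem_cat !in_cons.
  by case: (x == u); case: (x \in post).
- move=> b w; rewrite in_cons; case: (b =P u) => [-> _|_ /= Hb] Hw.
    by have := dfs_frame_succ HI (mem_head _ _) Hw; rewrite orbF.
  exact: (dfs_done_succ HI Hb Hw).
- by move=> v ws Hv; apply: (dfs_frame_succ HI); rewrite in_cons Hv orbT.
- by move=> v ws Hv; apply: (dfs_frame_sub HI); rewrite in_cons Hv orbT.
- by have := dfs_stack_sorted HI; rewrite stackE => /path_sorted.
- exact: pop_escape.
- exact: pop_post_order.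
- move=> x; rewrite in_cons; case: (x =P u) => [->|_ /=] Hx.
    by rewrite (dfs_stack_reach HI) ?orbT // stackE mem_head.
  exact: (dfs_post_reach HI Hx).
- by move=> g Hg; apply: (dfs_stack_reach HI); rewrite stackE in_cons Hg orbT.
Qed.

End Pop.

Lemma dfs_inv_skip K P0 root (vis : {set V}) v w ws stk post : w \in vis ->
  dfs_inv K P0 root vis ((v, w :: ws) :: stk) post ->
  dfs_inv K P0 root vis ((v, ws) :: stk) post.
Proof.
move=> wvis HI; split; try exact: (dfs_visE HI); try exact: (dfs_uniq HI);
  try exact: (dfs_oldN HI); try exact: (dfs_done_succ HI);
  try exact: (dfs_stack_sorted HI); try exact: (dfs_escape HI);
  try exact: (dfs_post_order HI); try exact: (dfs_post_reach HI);
  try exact: (dfs_stack_reach HI).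
- move=> v' ws'; rewrite in_cons => /orP [/eqP [-> ->]|H] x Hx.
    have := dfs_frame_succ HI (mem_head _ _) Hx; rewrite in_cons.
    by case: (x =P w) => [->|_]; rewrite ?wvis.
  by apply: (dfs_frame_succ HI) Hx; rewrite in_cons H orbT.
- move=> v' ws'; rewrite in_cons => /orP [/eqP [-> ->]|H] x Hx.
    by apply: (dfs_frame_sub HI (mem_head _ _)); rewrite in_cons Hx orbT.
  by apply: (dfs_frame_sub HI) Hx; rewrite in_cons H orbT.
Qed.

Section Push.
Variables (K : {set V}) (P0 : seq V) (root v w : V) (vis : {set V}).
Variables (ws : seq V) (stk : seq (V * seq V)) (post : seq V).
Hypothesis wvis : w \notin vis.
Hypothesis HI : dfs_inv K P0 root vis ((v, w :: ws) :: stk) post.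

Let stackE : stack_nodes ((v, w :: ws) :: stk) = v :: stack_nodes stk.
Proof. by []. Qed.

Let stackE' : stack_nodes ((w, next w) :: (v, ws) :: stk) = w :: v :: stack_nodes stk.
Proof. by []. Qed.

Lemma push_uniq : uniq (post ++ stack_nodes ((w, next w) :: (v, ws) :: stk)).
Proof.
rewrite stackE'; move: (uniq_catCA post [:: w] (v :: stack_nodes stk)) => /= ->.
rewrite mem_cat negb_or; move: (dfs_uniq HI); rewrite stackE => ->.
by rewrite andbT; apply/andP; split; apply: contra wvis => H;
  rewrite (dfs_visE HI) stackE H ?orbT.
Qed.

Lemma push_frame_succ a b : (a, b) \in (w, next w) :: (v, ws) :: stk ->
  forall x, x \in next a -> (x \in w |: vis) || (x \in b).
Proof.
rewrite !in_cons => /or3P [/eqP [-> ->]|/eqP [-> ->]|H] x Hx.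
- by rewrite Hx orbT.
- have := dfs_frame_succ HI (mem_head _ _) Hx; rewrite in_cons in_setU1.
  by case: (x == w); case: (x \in vis).
- have Hab : (a, b) \in (v, w :: ws) :: stk by rewrite in_cons H orbT.
  by have := dfs_frame_succ HI Hab Hx; rewrite in_setU1; case/orP => ->; rewrite ?orbT.
Qed.

Lemma dfs_inv_push : dfs_inv K P0 root (w |: vis) ((w, next w) :: (v, ws) :: stk) post.
Proof.
have wK : w \notin K by apply: contra wvis => H; rewrite (dfs_visE HI) H.
have vw : w \in next v by apply: (dfs_frame_sub HI (mem_head _ _)); rewrite mem_head.
split.
- by move=> x; rewrite in_setU1 (dfs_visE HI) stackE stackE' !in_cons;
     case: (x == w); case: (x \in K); case: (x == v); case: (x \in post).
- exact: push_uniq.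
- move=> x Hx; have := dfs_oldN HI Hx; rewrite stackE stackE' !mem_cat !in_cons.
  by rewrite (_ : (x == w) = false) //; apply/eqP => Exw; rewrite -Exw Hx in wK.
- by move=> b x Hb Hx; rewrite in_setU1 (dfs_done_succ HI Hb Hx) orbT.
- exact: push_frame_succ.
- move=> a b; rewrite !in_cons => /or3P [/eqP [-> ->]|/eqP [-> ->]|H] x Hx //.
    by apply: (dfs_frame_sub HI (mem_head _ _)); rewrite in_cons Hx orbT.
  by apply: (dfs_frame_sub HI) Hx; rewrite in_cons H orbT.
- rewrite stackE' /=; have := dfs_stack_sorted HI; rewrite stackE /= => ->.
  by rewrite andbT /reached_from connect1.
- move=> x y Hx HyK Hyp Hxy; have [g Hg Hgx] := dfs_escape HI Hx HyK Hyp Hxy.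
  by exists g => //; rewrite stackE' in_cons; rewrite stackE in Hg; rewrite Hg orbT.
- move=> x y Hx Hy Hxy Hyx; have [z Hz Hz'] := dfs_post_order HI Hx Hy Hxy Hyx.
  exists z => //; move: Hz'; rewrite stackE stackE' !in_cons.
  by case: (z == w); case: (z == v).
- exact: (dfs_post_reach HI).
- move=> g; rewrite stackE' in_cons => /orP [/eqP ->|H].
    by apply: connect_trans (dfs_stack_reach HI _) (connect1 vw); rewrite stackE mem_head.
  by apply: (dfs_stack_reach HI); rewrite stackE.
Qed.

End Push.

Lemma unvisited_costU1 (vis : {set V}) w : w \notin vis ->
  unvisited_cost vis = visit_cost w + unvisited_cost (w |: vis).
Proof.
move=> wvis; rewrite /unvisited_cost (bigD1 w) //=; congr (_ + _).
by apply: eq_bigl => x; rewrite in_setU1 negb_or andbC.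
Qed.

Lemma dfs_loop_spec K P0 root fuel vis stk post c :
  dfs_potential vis stk < fuel -> dfs_inv K P0 root vis stk post ->
  let: (vis', post', c') := dfs_loop next ncost fuel vis stk post c in
  [/\ dfs_done K vis' post', (forall x, x \in post' -> (x \in P0) || reach root x),
      vis \subset vis' & c' + unvisited_cost vis' <= c + dfs_potential vis stk].
Proof.
elim: fuel vis stk post c => [//|fuel IH] vis stk post c Hlt HI /=.
case: stk Hlt HI => [|[v [|w ws]] stk] Hlt HI.
- split; [exact: dfs_inv_done HI | exact: (dfs_post_reach HI) | by [] |].
  by rewrite /dfs_potential /= add0n leq_add2l.
- have Hlt' : dfs_potential vis stk < fuel by move: Hlt; rewrite /dfs_potential /=; lia.
  have := IH vis stk (v :: post) c.+1 Hlt' (dfs_inv_pop HI).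
  case: dfs_loop => [[vis' post'] c'] [Hdone Hreach Hsub Hc]; split => //.
  by move: Hc; rewrite /dfs_potential /=; lia.
- case wvis: (w \in vis).
  + have Hlt' : dfs_potential vis ((v, ws) :: stk) < fuel.
      by move: Hlt; rewrite /dfs_potential /=; lia.
    have := IH _ _ post c.+1 Hlt' (dfs_inv_skip wvis HI).
    case: dfs_loop => [[vis' post'] c'] [Hdone Hreach Hsub Hc]; split => //.
    by move: Hc; rewrite /dfs_potential /=; lia.
  + have EP := unvisited_costU1 (negbT wvis).
    have Hlt' : dfs_potential (w |: vis) ((w, next w) :: (v, ws) :: stk) < fuel.
      by move: Hlt; rewrite /dfs_potential /= EP /visit_cost; lia.
    have := IH _ _ post (c + (ncost w).+1) Hlt' (dfs_inv_push (negbT wvis) HI).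
    case: dfs_loop => [[vis' post'] c'] [Hdone Hreach Hsub Hc]; split => //.
    * exact: subset_trans (subsetUr _ _) Hsub.
    * by move: Hc; rewrite /dfs_potential /= EP /visit_cost; lia.
Qed.

Lemma sum_visit_cost :
  \sum_w visit_cost w = \sum_w size (next w) + \sum_w ncost w + #|V|.
Proof.
rewrite /visit_cost; under eq_bigr do rewrite -addn1.
by rewrite !big_split /= sum1_card.
Qed.

Lemma unvisited_cost_le (vis : {set V}) : unvisited_cost vis <= \sum_w visit_cost w.
Proof. by rewrite [X in _ <= X](bigID (fun w => w \notin vis)) /= leq_addr. Qed.

Lemma dfs_inv_start K vis v post : dfs_done K vis post -> v \notin vis ->
  dfs_inv K post v (v |: vis) [:: (v, next v)] post.
Proof.
move=> HS vvis; split.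
- by move=> x; rewrite in_setU1 (done_visE HS) /= in_cons in_nil orbF;
     case: (x == v); case: (x \in K); case: (x \in post).
- rewrite /= cat_uniq (done_uniq HS) /= andbT orbF.
  by apply: contra vvis => H; rewrite (done_visE HS) H orbT.
- move=> x Hx; rewrite mem_cat negb_or (done_oldN HS Hx) /= in_cons in_nil orbF.
  by apply/eqP => Exv; rewrite -Exv (done_visE HS) Hx in vvis.
- move=> b w Hb Hw; rewrite in_setU1 (done_visE HS).
  by rewrite (done_closed HS Hb (connect1 (Hw : grel next b w))) orbT.
- by move=> a b; rewrite in_cons in_nil orbF => /eqP [-> ->] w ->; rewrite orbT.
- by move=> a b; rewrite in_cons in_nil orbF => /eqP [-> ->].
- by [].
- move=> x y Hx HyK Hyp Hxy; have := done_closed HS Hx Hxy.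
  by rewrite (negbTE HyK) (negbTE Hyp).
- move=> x y Hx Hy Hxy Hyx; have [z Hz Hz'] := done_post_order HS Hx Hy Hxy Hyx.
  by exists z => //; rewrite Hz' orbT.
- by move=> x ->.
- by move=> g; rewrite /= in_cons in_nil orbF => /eqP ->.
Qed.

Lemma dfs_from_spec (E : rel V) K vis v post c :
  \sum_u size (next u) <= nedges E -> \sum_u ncost u <= nedges E ->
  dfs_done K vis post -> v \notin vis ->
  let: (vis', post', c') := dfs_from E next ncost vis v post c in
  [/\ dfs_done K vis' post', (forall x, x \in post' -> (x \in post) || reach v x),
      vis \subset vis', v \in vis' & c' + unvisited_cost vis' <= c.+1 + unvisited_cost vis].
Proof.
move=> Hnext Hncost HS vvis; rewrite /dfs_from.
have EP := unvisited_costU1 vvis.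
have Hlt : dfs_potential (v |: vis) [:: (v, next v)] < dfs_fuel E.
  have := unvisited_cost_le vis; rewrite sum_visit_cost EP.
  rewrite /dfs_potential /dfs_fuel /visit_cost /=.
  by move: Hnext Hncost; rewrite -!addnn; lia.
have := dfs_loop_spec (c + (ncost v).+1) Hlt (dfs_inv_start HS vvis).
case: dfs_loop => [[vis' post'] c'] [Hdone Hreach Hsub Hc]; split => //.
- exact: subset_trans (subsetUr _ _) Hsub.
- by apply: (subsetP Hsub); rewrite setU11.
- by move: Hc; rewrite /dfs_potential /= EP /visit_cost; lia.
Qed.

Definition pass1_step (E : rel V) (acc : {set V} * seq V * nat) (v : V) :=
  let: (vis, post, c) := acc in
  if v \in vis then (vis, post, c.+1) else dfs_from E next ncost vis v post c.+1.

Lemma pass1_foldl_spec (E : rel V) l vis post c :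
  \sum_u size (next u) <= nedges E -> \sum_u ncost u <= nedges E ->
  dfs_done set0 vis post ->
  let: (vis', post', c') := foldl (pass1_step E) (vis, post, c) l in
  [/\ dfs_done set0 vis' post', {subset l <= vis'}, vis \subset vis' &
      c' + unvisited_cost vis' <= c + (size l).*2 + unvisited_cost vis].
Proof.
move=> Hnext Hncost; elim: l vis post c => [|v l IH] vis post c HS /=.
  by split=> //; rewrite addn0.
case vvis: (v \in vis).
  have := IH vis post c.+1 HS; case: foldl => [[vis' post'] c'] [Hdone Hl Hsub Hc].
  split=> //; last by move: Hc; rewrite doubleS; lia.
  by move=> x; rewrite in_cons => /orP [/eqP ->|/Hl //]; apply: (subsetP Hsub).
have := dfs_from_spec c.+1 Hnext Hncost HS (negbT vvis).
case: dfs_from => [[vis1 post1] c1] [HS1 _ Hsub1 Hv1 Hc1].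
have := IH vis1 post1 c1 HS1; case: foldl => [[vis' post'] c'] [Hdone Hl Hsub Hc].
split=> //.
- by move=> x; rewrite in_cons => /orP [/eqP ->|/Hl //]; apply: (subsetP Hsub).
- exact: subset_trans Hsub1 Hsub.
- by move: Hc Hc1; rewrite doubleS; lia.
Qed.

Lemma pass1_spec (E : rel V) order :
  \sum_u size (next u) <= nedges E -> \sum_u ncost u <= nedges E ->
  let: (post, c) := pass1 E next ncost order in
  [/\ uniq post, {subset order <= post},
      (forall x v, x \in post -> v \in post -> reach x v -> ~~ reach v x ->
        exists2 z, reach x z && reach z x & index z post < index v post) &
      c <= (size order).*2 + \sum_w visit_cost w].
Proof.
move=> Hnext Hncost.
have HS0 : dfs_done set0 set0 [::].
  by split=> [x|//|x|x y|//]; rewrite ?inE.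
have := pass1_foldl_spec order 0 Hnext Hncost HS0; rewrite /pass1 -/(pass1_step E).
case: foldl => [[vis' post'] c'] [HS Hl _ Hc]; split.
- exact: (done_uniq HS).
- by move=> x /Hl; rewrite (done_visE HS) inE.
- exact: (done_post_order HS).
- by move: Hc (unvisited_cost_le vis') (unvisited_cost_le set0); lia.
Qed.

End DepthFirstSearch.

Section KosarajuSecondPass.
Variables (V : finType) (E : rel V) (next rnext : V -> seq V) (rncost : V -> nat).
Local Notation reach := (connect (grel next)).
Local Notation rreach := (connect (grel rnext)).
Hypothesis rnextE : forall x y, (y \in rnext x) = (x \in next y).

Lemma rreachE x y : rreach x y = reach y x.
Proof.
rewrite -[RHS](connect_rev (grel next)).
by apply: eq_connect => a b; rewrite /= rnextE.
Qed.

Variable order : seq V.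
Hypothesis order_finish : forall x v, x \in order -> v \in order ->
  reach x v -> ~~ reach v x ->
  exists2 z, reach x z && reach z x & index z order < index v order.
Hypothesis order_sources : forall x y, y \in next x -> x \in order.
Hypothesis sum_rnext : \sum_u size (rnext u) <= nedges E.
Hypothesis sum_rncost : \sum_u rncost u <= nedges E.

Definition pass2_step (acc : {set V} * seq (seq V) * nat) (v : V) :=
  let: (vis, comps, c) := acc in
  if v \in vis then (vis, comps, c.+1)
  else let: (vis', comp, c') := dfs_from E rnext rncost vis v [::] c.+1 in
       (vis', comp :: comps, c').

Definition is_scc_of (v : V) (comp : seq V) : Prop :=
  forall x, (x \in comp) = reach v x && reach x v.

Record pass2_inv (pre : seq V) (vis : {set V}) (comps : seq (seq V)) : Prop := {
  p2_rclosed : forall x y, x \in vis -> rreach x y -> y \in vis;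
  p2_pre : {subset pre <= vis};
  p2_scc_closed : forall x y, x \in vis -> reach x y -> reach y x -> y \in vis;
  p2_comps : forall comp, comp \in comps -> exists v, is_scc_of v comp;
  p2_uniq : uniq (flatten comps);
  p2_visE : forall x, (x \in vis) = (x \in flatten comps)
}.

Lemma mem_order x v : reach x v -> x != v -> x \in order.
Proof. by move=> /connect_first_edge xv /xv [z]; apply: order_sources. Qed.

(* The reverse search from the first unvisited vertex [v] in finishing order
   cannot leave the SCC of [v]: a vertex [x] with [reach x v] but not
   [reach v x] has an SCC finishing before [v], hence already visited. *)
Lemma pass2_tree_scc pre v l vis comps vis1 comp :
  order = rcons pre v ++ l -> pass2_inv pre vis comps -> v \notin vis ->
  dfs_done rnext vis vis1 comp -> (forall x, x \in comp -> rreach v x) ->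
  v \in vis1 -> is_scc_of v comp.
Proof.
move=> orderE HJ vvis HS1 Hreach vvis1.
have vpre : v \notin pre by apply: contra vvis; apply: (p2_pre HJ).
move=> x; apply/idP/idP.
- move=> xc; have xv : reach x v by rewrite -rreachE Hreach.
  rewrite xv andbT; apply/negPn/negP => vx.
  have xo : x \in order.
    case: (x =P v) => [Exv|/eqP Nxv]; last exact: mem_order xv Nxv.
    by rewrite Exv connect0 in vx.
  have vo : v \in order by rewrite orderE mem_cat mem_rcons mem_head.
  have [z /andP [xz zx] Hz] := order_finish xo vo xv vx.
  have index_v : index v order = size pre.
    by rewrite orderE -cats1 -catA index_cat (negbTE vpre) /= eqxx addn0.
  have zpre : z \in pre.
    move: Hz; rewrite index_v orderE -cats1 -catA index_cat.
    by case: (z \in pre) => // H; rewrite ltnNge leq_addr in H.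
  have xvis : x \in vis := p2_scc_closed HJ (p2_pre HJ zpre) zx xz.
  by have := done_oldN HS1 xvis; rewrite xc.
- case/andP => vx xv.
  have vc : v \in comp by move: vvis1; rewrite (done_visE HS1) (negbTE vvis).
  have := done_closed HS1 (x := v) (y := x); rewrite vc orbT rreachE xv.
  case/(_ isT isT)/orP => // xvis.
  by have := p2_scc_closed HJ xvis xv vx; rewrite (negbTE vvis).
Qed.

Lemma pass2_inv_tree pre v vis comps vis1 comp :
  pass2_inv pre vis comps -> dfs_done rnext vis vis1 comp -> v \in vis1 ->
  is_scc_of v comp -> pass2_inv (rcons pre v) vis1 (comp :: comps).
Proof.
move=> HJ HS1 vvis1 Hcomp; split.
- by move=> x y Hx Hxy; rewrite (done_visE HS1) (done_closed HS1 _ Hxy) // -(done_visE HS1).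
- move=> x; rewrite mem_rcons in_cons => /orP [/eqP -> //|/(p2_pre HJ) xvis].
  by rewrite (done_visE HS1) xvis.
- move=> x y; rewrite (done_visE HS1) => /orP [Hx|Hx] xy yx.
    by rewrite (done_visE HS1) (p2_scc_closed HJ Hx xy yx).
  rewrite (done_visE HS1) Hcomp; move: Hx; rewrite Hcomp => /andP [vx xv].
  by rewrite (connect_trans vx xy) (connect_trans yx xv) orbT.
- move=> comp'; rewrite in_cons => /orP [/eqP ->|]; first by exists v.
  exact: (p2_comps HJ).
- rewrite /= cat_uniq (done_uniq HS1) (p2_uniq HJ) andbT /=.
  by apply/hasPn => x; rewrite -(p2_visE HJ) => /(done_oldN HS1).
- by move=> x; rewrite (done_visE HS1) /= mem_cat (p2_visE HJ) orbC.
Qed.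

Lemma pass2_foldl_spec l pre vis comps c :
  order = pre ++ l -> pass2_inv pre vis comps ->
  let: (vis', comps', c') := foldl pass2_step (vis, comps, c) l in
  pass2_inv (pre ++ l) vis' comps' /\
  c' + unvisited_cost rnext rncost vis' <= c + (size l).*2 + unvisited_cost rnext rncost vis.
Proof.
elim: l pre vis comps c => [|v l IH] pre vis comps c orderE HJ /=.
  by rewrite cats0 addn0.
rewrite -cat_rcons in orderE *.
case vvis: (v \in vis).
  have HJ' : pass2_inv (rcons pre v) vis comps.
    case: HJ => H1 H2 H3 H4 H5 H6; split=> // x.
    by rewrite mem_rcons in_cons => /orP [/eqP ->|/H2].
  have := IH (rcons pre v) vis comps c.+1 orderE HJ'.
  case: foldl => [[vis' comps'] c'] [HJ'' Hc]; split=> //.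
  by move: Hc; rewrite doubleS; lia.
have HS : dfs_done rnext vis vis [::].
  split=> // [x|x y]; rewrite ?orbF // => Hx Hxy.
  exact: (p2_rclosed HJ Hx Hxy).
have := dfs_from_spec c.+1 sum_rnext sum_rncost HS (negbT vvis).
case: dfs_from => [[vis1 comp] c1] [HS1 Hreach _ vvis1 Hc1].
have Hcomp := pass2_tree_scc orderE HJ (negbT vvis) HS1 Hreach vvis1.
have := IH (rcons pre v) vis1 (comp :: comps) c1 orderE (pass2_inv_tree HJ HS1 vvis1 Hcomp).
case: foldl => [[vis' comps'] c'] [HJ'' Hc]; split=> //.
by move: Hc Hc1; rewrite doubleS; lia.
Qed.

Lemma pass2_spec :
  let: (comps, c) := pass2 E rnext rncost order in
  [/\ (forall comp, comp \in comps -> exists v, is_scc_of v comp),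
      (forall x, x \in order -> exists2 comp, comp \in comps & x \in comp),
      uniq (flatten comps) &
      c <= (size order).*2 + \sum_w visit_cost rnext rncost w].
Proof.
have HJ0 : pass2_inv [::] set0 [::] by split=> //= [x y|x y|x]; rewrite inE.
have := @pass2_foldl_spec order [::] set0 [::] 0 (erefl _) HJ0.
rewrite /pass2 -/pass2_step.
case: foldl => [[vis' comps'] c'] [HJ Hc]; split.
- exact: (p2_comps HJ).
- by move=> x /(p2_pre HJ); rewrite (p2_visE HJ) => /flattenP.
- exact: (p2_uniq HJ).
- by move: Hc (unvisited_cost_le rnext rncost vis') (unvisited_cost_le rnext rncost set0); lia.
Qed.

End KosarajuSecondPass.

Section EdgeCount.
Variables (V : finType) (E : rel V).

Lemma size_filter_enum (P : pred V) : size [seq w <- enum V | P w] = \sum_w (P w : nat).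
Proof. by rewrite size_filter -sum1_count big_mkcond /= enumT. Qed.

Lemma sum_size_preds : \sum_x size (preds E x) = nedges E.
Proof.
rewrite /nedges /preds /succs.
under eq_bigr do rewrite size_filter_enum.
under [RHS]eq_bigr do rewrite size_filter_enum.
by rewrite exchange_big.
Qed.

Lemma nedgesE : nedges E = #|[pred p : V * V | E p.1 p.2]|.
Proof.
rewrite /nedges /succs; under eq_bigr do rewrite size_filter_enum.
rewrite pair_bigA /= -sum1_card [RHS]big_mkcond /=.
by apply: eq_bigr => p _; rewrite inE; case: (E p.1 p.2).
Qed.

Lemma sum_size_succsS : \sum_v (size (succs E v)).+1 = nedges E + #|V|.
Proof. by under eq_bigr do rewrite -addn1; rewrite big_split /= sum1_card. Qed.

Lemma sum_size_predsS : \sum_v (size (preds E v)).+1 = nedges E + #|V|.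
Proof.
by under eq_bigr do rewrite -addn1; rewrite big_split /= sum_size_preds sum1_card.
Qed.

Lemma card_le_nedges : (forall v, exists w, E v w) -> #|V| <= nedges E.
Proof.
move=> Hsucc; rewrite -sum1_card /nedges; apply: leq_sum => v _.
have [w Hw] := Hsucc v; rewrite lt0n; apply/negP => /eqP /size0nil Hnil.
have : w \in succs E v by rewrite mem_filter Hw mem_enum.
by rewrite Hnil.
Qed.

Lemma mem_preds u x : (u \in preds E x) = E u x.
Proof. by rewrite mem_filter mem_enum andbT. Qed.

Lemma mem_succs u x : (x \in succs E u) = E u x.
Proof. by rewrite mem_filter mem_enum andbT. Qed.

End EdgeCount.

Section Pruning.
Variables (V : finType) (owner : V -> bool) (E : rel V).
Variables (W Z : {set V}) (a : bool) (s : V -> option V).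

Definition closure_violated (v : V) : bool :=
  if owner v == a then ~~ (if s v is Some w then w \in Z else false)
  else ~~ all (fun w => (w \notin W) || (w \in Z)) (succs E v).

Definition init_cost (v : V) : nat :=
  if owner v == a then 1 else (size (succs E v)).+1.

Lemma init_badE : init_bad owner E W Z a s =
  ([seq v <- enum Z | closure_violated v], \sum_(v <- enum Z) init_cost v).
Proof.
rewrite /init_bad; elim: (enum Z) => [|v l IH] /=; first by rewrite big_nil.
rewrite IH big_cons /closure_violated /init_cost.
case: (owner v == a) => /=; last by case: all => /=; rewrite addnC.
by case: (match s v with Some w => w \in Z | None => false end) => /=; rewrite add1n.
Qed.

Hypothesis Z_sub_W : Z \subset W.
Hypothesis s_edge : forall v w, s v = Some w -> E v w.

Definition depends_on (u x : V) : bool :=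
  if owner u == a then s u == Some x else E u x.

Definition pruned_preds (B : {set V}) (x : V) : seq V :=
  [seq u <- preds E x | [&& u \in Z, u \notin B & (owner u == a) ==> (s u == Some x)]].

Definition pred_cost (x : V) : nat := (size (preds E x)).+1.

(* [B] is the set of vertices removed so far; those of [work] still have to
   be propagated to their predecessors. *)
Record prune_inv (B : {set V}) (work : seq V) : Prop := {
  prune_sub : B \subset Z;
  prune_sound : forall X, ext_ok owner E W Z a s X -> forall x, x \in B -> x \notin X;
  prune_rest : forall u, u \in Z -> u \notin B ->
    ~~ closure_violated u /\ (forall x, x \in B -> x \notin work -> ~~ depends_on u x);
  prune_work : {subset work <= B}
}.

Lemma ext_okP X : ext_ok owner E W Z a s X ->
  [/\ X \subset Z,
      forall v, v \in X -> owner v = a -> if s v is Some w then w \in X else false &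
      forall v, v \in X -> owner v != a -> forall w, w \in W -> E v w -> w \in X].
Proof.
case/andP => XZ /forallP HX; split=> // v vX; have := HX v; rewrite vX /=.
  by move=> + vown; rewrite vown eqxx.
move=> + vown; rewrite (negbTE vown) => /forallP Hw w wW Evw.
by have := Hw w; rewrite wW Evw.
Qed.

Lemma mem_pruned_preds B x u :
  (u \in pruned_preds B x) = [&& E u x, u \in Z, u \notin B & (owner u == a) ==> (s u == Some x)].
Proof. by rewrite mem_filter mem_preds andbC. Qed.

Lemma prune_inv_step B x work : prune_inv B (x :: work) ->
  prune_inv (B :|: [set u in pruned_preds B x]) (pruned_preds B x ++ work).
Proof.
move=> HP; have xB : x \in B by apply: (prune_work HP); rewrite mem_head.
have xW : x \in W by apply/(subsetP Z_sub_W)/(subsetP (prune_sub HP)).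
split.
- rewrite subUset (prune_sub HP) /=.
  by apply/subsetP => u; rewrite inE mem_pruned_preds => /and4P [].
- move=> X HX y; rewrite in_setU => /orP [/(prune_sound HP HX) //|].
  rewrite inE mem_pruned_preds => /and4P [Eyx yZ _ Hy]; apply/negP => yX.
  have [_ HXa HXn] := ext_okP HX; have := prune_sound HP HX xB; apply/negP/negPn.
  case Ho: (owner y == a) Hy => /= Hy; last exact: HXn y yX (negbT Ho) x xW Eyx.
  by have := HXa y yX (eqP Ho); rewrite (eqP Hy).
- move=> u uZ; rewrite in_setU negb_or => /andP [uB uS].
  have [nviol Hdep] := prune_rest HP uZ uB; split=> // y.
  rewrite in_setU mem_cat negb_or => /orP [yB|]; last by rewrite inE => ->.
  case/andP => yS ywork; case: (y =P x) => [->|Nyx].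
    rewrite /depends_on; apply/negP => Hd; move: uS; rewrite inE mem_pruned_preds uZ uB /=.
    by case Ho: (owner u == a) Hd => /= Hd; rewrite Hd // (s_edge (eqP Hd)).
  by apply: Hdep yB _; rewrite in_cons negb_or ywork andbT; apply/eqP.
- move=> y; rewrite mem_cat in_setU => /orP [Hy|Hy]; first by rewrite inE Hy orbT.
  by rewrite (prune_work HP) // in_cons Hy orbT.
Qed.

Lemma propagate_spec fuel B work c :
  size work + #|~: B| < fuel -> prune_inv B work ->
  let: (B', c') := propagate owner E fuel Z a s B work c in
  prune_inv B' [::] /\
  c' <= c + \sum_(x <- work) pred_cost x + \sum_(u | u \notin B) pred_cost u.
Proof.
elim: fuel B work c => [//|fuel IH] B work c Hlt HP /=.
case: work Hlt HP => [|x work] Hlt HP.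
  by split=> //; rewrite big_nil addn0 leq_addr.
rewrite -/(pruned_preds B x); set nw := pruned_preds B x; set S := [set u in nw].
have uniq_nw : uniq nw by apply/filter_uniq/filter_uniq/enum_uniq.
have S_notB : S \subset ~: B.
  by apply/subsetP => u; rewrite inE mem_pruned_preds inE => /and4P [].
have card_S : #|S| = size nw by rewrite cardsE; apply/card_uniqP.
have card_rest : #|~: (B :|: S)| + size nw = #|~: B|.
  rewrite -card_S -(cardsID S (~: B)) (setIidPr S_notB) addnC setDE setCU.
  by rewrite [~: B :&: _]setIC.
have cost_rest : \sum_(u | u \notin B) pred_cost u =
    \sum_(u <- nw) pred_cost u + \sum_(u | u \notin B :|: S) pred_cost u.
  rewrite (bigID (fun u => u \in S)) /= big_uniq //; congr (_ + _).
    apply: eq_bigl => u; rewrite inE andbC; case unw: (u \in nw) => //=.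
    by have := subsetP S_notB u; rewrite inE unw inE => ->.
  by apply: eq_bigl => u; rewrite in_setU negb_or.
have Hlt' : size (nw ++ work) + #|~: (B :|: S)| < fuel.
  by move: Hlt; rewrite size_cat /= -card_rest; lia.
have := IH _ _ (c + (size (preds E x)).+1) Hlt' (prune_inv_step HP).
case: propagate => B' c' [HP' Hc]; split=> //.
rewrite big_cat /= in Hc; rewrite big_cons cost_rest; move: Hc; rewrite /pred_cost; lia.
Qed.

Lemma prune_done_ext_Y B : prune_inv B [::] -> ext_Y owner E W Z a s = Z :\: B.
Proof.
move=> HP.
have ok : ext_ok owner E W Z a s (Z :\: B).
  apply/andP; split; first exact: subsetDl.
  apply/forallP => v; apply/implyP; rewrite inE => /andP [vB vZ].
  have [nviol Hdep] := prune_rest HP vZ vB; move: nviol; rewrite /closure_violated.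
  have {}Hdep x : x \in B -> ~~ depends_on v x by move=> xB; apply: Hdep.
  case Ho: (owner v == a) => /=.
    case Hsv: (s v) => [w|] //= /negPn wZ; rewrite inE wZ andbT.
    by apply/negP => wB; have := Hdep w wB; rewrite /depends_on Ho Hsv eqxx.
  move/negPn/allP => Hall; apply/forallP => w; apply/implyP => wW; apply/implyP => Evw.
  have := Hall w; rewrite mem_succs Evw wW /= => /(_ isT) wZ.
  rewrite inE wZ andbT; apply/negP => wB; have := Hdep w wB.
  by rewrite /depends_on Ho Evw.
apply/setP => v; apply/bigcupP/idP => [[X HX vX]|vZB]; last by exists (Z :\: B).
have [XZ _ _] := ext_okP HX; rewrite inE (subsetP XZ v vX) andbT.
by apply/negP => vB; have := prune_sound HP HX vB; rewrite vX.
Qed.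

Lemma prune_inv_init : let B0 := [seq v <- enum Z | closure_violated v] in
  [/\ prune_inv [set x in B0] B0, size B0 + #|~: [set x in B0]| = #|V| &
      \sum_(x <- B0) pred_cost x + \sum_(u | u \notin [set x in B0]) pred_cost u =
      \sum_u pred_cost u].
Proof.
move=> B0.
have uniq_B0 : uniq B0 by apply/filter_uniq/enum_uniq.
have mem_B0 x : (x \in [set x in B0]) = closure_violated x && (x \in Z).
  by rewrite inE mem_filter mem_enum.
split.
- split.
  + by apply/subsetP => x; rewrite mem_B0 => /andP [].
  + move=> X HX x; rewrite mem_B0 => /andP [viol xZ]; apply/negP => xX.
    have [XZ HXa HXn] := ext_okP HX; move: viol; rewrite /closure_violated.
    case Ho: (owner x == a) => /=.
      have := HXa x xX (eqP Ho); case: (s x) => // w wX.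
      by rewrite (subsetP XZ w wX).
    case/allPn => w; rewrite mem_succs negb_or negbK => Exw /andP [wW wZ].
    by have := HXn x xX (negbT Ho) w wW Exw => /(subsetP XZ); rewrite (negbTE wZ).
  + by move=> u uZ; rewrite mem_B0 uZ andbT => nviol; split=> // x; rewrite inE => ->.
  + by move=> y Hy; rewrite inE.
- by have := cardsC [set x in B0]; rewrite cardsE (card_uniqP uniq_B0).
- rewrite [RHS](bigID (fun u => u \in B0)) /= big_uniq //.
  by congr (_ + _); apply: eq_bigl => u; rewrite inE.
Qed.

Lemma prune_spec : let: (B0, c0) := init_bad owner E W Z a s in
  let: (B, c1) := propagate owner E #|V|.+1 Z a s [set x in B0] B0 c0 in
  ext_Y owner E W Z a s = Z :\: B /\ c1 <= (nedges E + #|V|).*2.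
Proof.
rewrite init_badE; have [HP card_init cost_init] := prune_inv_init.
have := propagate_spec (fuel := #|V|.+1) (\sum_(v <- enum Z) init_cost v) _ HP.
rewrite card_init => /(_ (ltnSn _)).

case: propagate => B c1 [HP' Hc]; split; first exact: prune_done_ext_Y HP'.
have init_le : \sum_(v <- enum Z) init_cost v <= nedges E + #|V|.
  rewrite -sum_size_succsS big_enum /= [X in _ <= X](bigID (mem Z)) /=.
  apply: leq_trans (leq_addr _ _); apply: leq_sum => v _.
  by rewrite /init_cost; case: (owner v == a).
move: Hc; rewrite -addnA cost_init /pred_cost sum_size_predsS -addnn; lia.
Qed.

End Pruning.

Section BottomSCC.
Variables (V : finType) (e : rel V) (nxt : V -> seq V) (Y : {set V}).
Variable comps : seq (seq V).
Hypothesis nxtE : forall u w, (w \in nxt u) = e u w.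
Hypothesis edge_src : forall u w, e u w -> u \in Y.
Hypothesis comps_scc : forall comp, comp \in comps -> exists v, is_scc_of nxt v comp.
Hypothesis comps_cover : forall x, x \in Y -> exists2 comp, comp \in comps & x \in comp.

Definition scc_check (comp : seq V) : bool :=
  let C := [set x in comp] in
  all (fun x => all (fun w => w \in C) (nxt x)) comp && has (fun x => nxt x != [::]) comp.

Lemma reach_nxtE : connect (grel nxt) =2 connect e.
Proof. by apply: eq_connect => x y; rewrite /= nxtE. Qed.

Lemma checked_scc_bottom comp : comp \in comps -> scc_check comp ->
  is_bottom_scc e Y [set x in comp].
Proof.
move=> incomp /andP [/allP Hcl /hasP [x0 x0c Hne]].
have [v Hv] := comps_scc incomp.
have {}Hv x : (x \in [set x in comp]) = connect e v x && connect e x v.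
  by rewrite inE Hv !reach_nxtE.
have closedC x y : x \in [set x in comp] -> e x y -> y \in [set x in comp].
  by rewrite inE => xc; have := allP (Hcl x xc) y; rewrite nxtE.
have [w0 Hw0] : exists w0, e x0 w0.
  by case E0: (nxt x0) Hne => [|w0 ws] // _; exists w0; rewrite -nxtE E0 mem_head.
have x0C : x0 \in [set x in comp] by rewrite inE.
apply/and5P; split.
- by apply/set0Pn; exists x0.
- apply/subsetP => x xC; case: (x =P x0) => [->|/eqP Nx]; first exact: edge_src Hw0.
  have : connect e x x0.
    by move: xC x0C; rewrite !Hv => /andP [_ xv] /andP [vx0 _]; apply: connect_trans xv vx0.
  by case/connect_first_edge => // z; apply: edge_src.
- apply/forallP => u; apply/implyP => uC; apply/forallP => w; apply/implyP => wC.
  move: uC wC; rewrite !Hv => /andP [_ uv] /andP [vw _].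
  exact: connect_trans uv vw.
- apply/forallP => u; apply/implyP => uC; apply/forallP => w; apply/implyP => uw.
  exact: (connect_closed_pred (P := [pred z | z \in [set x in comp]])) uw.
- apply/existsP; exists x0; rewrite x0C /=; apply/existsP; exists w0.
  by rewrite Hw0 andbT (closedC x0 w0).
Qed.

Lemma bottom_scc_checked C : is_bottom_scc e Y C ->
  exists2 comp, comp \in comps & scc_check comp && (C == [set x in comp]).
Proof.
case/and5P => _ _ /forallP Hsc /forallP Hcl.
case/existsP => u /andP [uC /existsP [w /andP [wC euw]]].
have [comp incomp uc] := comps_cover (edge_src euw).
have [v Hv] := comps_scc incomp.
have {}Hsc x y : x \in C -> y \in C -> connect e x y.
  by move=> xC yC; have := Hsc x; rewrite xC /= => /forallP /(_ y); rewrite yC.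
have {}Hcl x y : x \in C -> connect e x y -> y \in C.
  by move=> xC xy; have := Hcl x; rewrite xC /= => /forallP /(_ y); rewrite xy.
have EC : C = [set x in comp].
  apply/setP => x; rewrite inE Hv !reach_nxtE.
  move: uc; rewrite Hv !reach_nxtE => /andP [vu uv].
  apply/idP/idP => [xC|/andP [vx xv]]; last exact: Hcl uC (connect_trans uv vx).
  by rewrite (connect_trans vu (Hsc u x uC xC)) (connect_trans (Hsc x u xC uC) uv).
exists comp => //; rewrite EC eqxx andbT; apply/andP; split.
- apply/allP => x xc; apply/allP => y; rewrite nxtE => exy; rewrite -EC.
  by apply: Hcl (connect1 exy); rewrite EC inE.
- apply/hasP; exists u => //; apply/eqP => Hnil; have := nxtE u w.
  by rewrite Hnil euw in_nil.
Qed.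

Lemma checked_sccsE :
  [set C | C \in [seq [set x in comp] | comp <- comps & scc_check comp]] =
  [set C | is_bottom_scc e Y C].
Proof.
apply/setP => C; rewrite !inE; apply/mapP/idP => [[comp]|/bottom_scc_checked [comp]].
  by rewrite mem_filter => /andP [ch incomp] ->; apply: checked_scc_bottom.
by move=> incomp /andP [ch /eqP ->]; exists comp; rewrite // mem_filter ch.
Qed.

End BottomSCC.

Section SearchRegion.
Variables (V : finType) (owner : V -> bool) (E : rel V).
Variables (W Z : {set V}) (a : bool) (s : V -> option V).
Hypothesis Z_sub_W : Z \subset W.
Hypothesis s_edge : forall v w, s v = Some w -> E v w.

Lemma ext_edge_sub Y u w : ext_edge owner E W Y a s u w -> E u w /\ u \in Y.
Proof. by case/and3P => uY _; case: (owner u == a) => [/eqP /s_edge|/andP []]. Qed.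

Lemma mem_hnext Y u w : (w \in hnext owner E W Y a s u) = ext_edge owner E W Y a s u w.
Proof.
rewrite mem_filter mem_succs andb_idr // => /ext_edge_sub [] //.
Qed.

Lemma mem_hrnext Y x y : (y \in hrnext owner E W Y a s x) = (x \in hnext owner E W Y a s y).
Proof.
rewrite mem_hnext mem_filter mem_preds andb_idr // => /ext_edge_sub [] //.
Qed.

Lemma sum_size_hnext Y : \sum_u size (hnext owner E W Y a s u) <= nedges E.
Proof. by apply: leq_sum => u _; rewrite size_filter count_size. Qed.

Lemma sum_size_hrnext Y : \sum_u size (hrnext owner E W Y a s u) <= nedges E.
Proof.
by rewrite -sum_size_preds; apply: leq_sum => u _; rewrite size_filter count_size.
Qed.

Lemma search_region_spec :
  let: (out, c) := search_region owner E W Z a s in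
  [set C | C \in out] = extract_tangles owner E W Z a s /\ c <= 20 * (nedges E + #|V|).
Proof.
rewrite /search_region.
have := prune_spec owner a Z_sub_W s_edge; rewrite init_badE.
case: propagate => B c1 [extYE Hc1]; set Y := Z :\: B.
have sum_scost : \sum_u scost E u <= nedges E by [].
have := pass1_spec (enum Y) (sum_size_hnext Y) sum_scost.
case: pass1 => order c3 [uniq_order Y_sub_order order_finish Hc3].
have order_sources x y : y \in hnext owner E W Y a s x -> x \in order.
  by rewrite mem_hnext => /ext_edge_sub [_ xY]; apply: Y_sub_order; rewrite mem_enum.
have sum_pcost : \sum_u pcost E u <= nedges E by rewrite sum_size_preds.
have := pass2_spec (mem_hrnext Y) order_finish order_sources (sum_size_hrnext Y) sum_pcost.
case: pass2 => comps c4 [comps_scc comps_cover uniq_comps Hc4]; split.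
  rewrite /extract_tangles extYE -/Y.
  apply: (checked_sccsE (nxt := hnext owner E W Y a s)) => //.
  - exact: mem_hnext.
  - by move=> u w /ext_edge_sub [].
  - by move=> x xY; apply/comps_cover/Y_sub_order; rewrite mem_enum.
have size_order : size order <= #|V| by rewrite -(card_uniqP uniq_order) max_card.
have size_Y : size (enum Y) <= #|V| by rewrite -cardE max_card.
have visit1 := sum_size_hnext Y; have visit2 := sum_size_hrnext Y.
rewrite !sum_visit_cost in Hc3 Hc4.
have check_cost : \sum_(comp <- comps) \sum_(x <- comp) (scost E x).+1 <= nedges E + #|V|.
  rewrite -big_flatten /= big_uniq // -sum_size_succsS.
  by rewrite [X in _ <= X](bigID (fun x => x \in flatten comps)) /= leq_addr.
have card_Y : #|Y| <= #|V| by apply: max_card.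
have card_Z : #|Z| <= #|V| by apply: max_card.
move: Hc1 Hc3 Hc4; rewrite -!addnn; lia.
Qed.

End SearchRegion.

Section Decomposition.
Variables (V : finType) (owner : V -> bool) (E : rel V) (pr : V -> nat).
Variable T : seq {set V}.

Lemma tattr_sub (W : {set V}) (T' : seq {set V}) (a : bool) (A : {set V}) :
  A \subset W -> tattr owner E pr W T' a A \subset W.
Proof.
move=> AW; apply: bigcap_inf; rewrite subxx /= /tattr_closed AW /=.
apply/and3P; split.
- by apply/forallP => v; apply/implyP => vW; apply/implyP.
- by apply/forallP => v; apply/implyP => vW; apply/implyP.
- by apply/allP => t _; apply/implyP => /and4P [].
Qed.

Lemma sub_tattr (W : {set V}) (T' : seq {set V}) (a : bool) (A : {set V}) :
  A \subset tattr owner E pr W T' a A.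
Proof. by apply/bigcapsP => Z /andP [_ /and4P []]. Qed.

Lemma search_spec rs W : is_decomp_from owner E pr T W rs ->
  map (fun out => [set C | C \in out]) (search owner E W rs).1 = extract_all owner E W rs /\
  (search owner E W rs).2 <= size rs * (20 * (nedges E + #|V|) + #|V|.+1) + 1.
Proof.
elim: rs W => [//|r rs IH] W /= [_ _ rsetE [s_region _] Hrest].
have Z_sub_W : rset r \subset W.
  by rewrite rsetE; apply: tattr_sub; apply/subsetP => v; rewrite inE => /andP [].
have s_edge v w : rstrat r v = Some w -> E v w by case/s_region.
have := search_region_spec owner (rplayer r) Z_sub_W s_edge.
case: search_region => out c [Hout Hc].
have := IH _ Hrest; case: search => outs c' [Houts Hc'] /=.
split; first by rewrite Hout Houts.
have card_r : #|rset r| <= #|V| by apply: max_card.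
rewrite mulSn; move: Hc Hc' card_r => /=.
by move Kdef: (20 * _ + _) => K; lia.
Qed.

Lemma size_decomp rs W : is_decomp_from owner E pr T W rs -> size rs <= (maxpr pr W).+1.
Proof.
elim: rs W => [//|r [//|r' rs] IH] W /= [_ _ rsetE _ Hrest].
have := IH _ Hrest; move: Hrest => /= [Wn' _ _ _ _] Hsize.
suff : maxpr pr (W :\: rset r) < maxpr pr W by move: Hsize; lia.
have [v vW' ->] : {v : V | v \in W :\: rset r & maxpr pr (W :\: rset r) = pr v}.
  by apply: eq_bigmax_cond; rewrite card_gt0.
move: vW'; rewrite inE => /andP [vZ vW].
rewrite ltn_neqAle (leq_bigmax_cond _ vW) andbT; apply: contra vZ => /eqP prv.
by rewrite rsetE (subsetP (sub_tattr _ _ _ _)) // inE vW prv eqxx.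
Qed.

End Decomposition.

Theorem lemma12 : exists c : nat,
  forall (V : finType) (owner : V -> bool) (E : rel V) (pr : V -> nat) (d : nat),
  (forall v, pr v <= d) ->
  (forall v, exists w, E v w) ->
  forall T : seq {set V},
  (forall t, t \in T -> exists s, is_tangle owner E pr t s) ->
  forall rs : seq (region V), is_decomp owner E pr T rs ->
  map (fun out => [set C | C \in out]) (search owner E setT rs).1
    = extract_all owner E setT rs /\
  (search owner E setT rs).2 <= c * (d.+1 * #|[pred p : V * V | E p.1 p.2]|) + c.
Proof.
exists 42 => V owner E pr d pr_le has_succ T _ rs Hdec.
have [-> Hcost] := search_spec Hdec; split=> //; rewrite -nedgesE.
have size_rs : size rs <= d.+1.
  by apply: leq_trans (size_decomp Hdec) _; rewrite ltnS; apply/bigmax_leqP.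
case: rs Hdec Hcost size_rs => [|r rs] Hdec Hcost size_rs; first by move: Hcost => /=; lia.
have n_le_m := card_le_nedges has_succ.
have n_gt0 : 0 < #|V| by case: Hdec => /set0Pn [v _] _ _ _ _; apply/card_gt0P; exists v.
have : size (r :: rs) * (20 * (nedges E + #|V|) + #|V|.+1) <= d.+1 * (42 * nedges E).
  by apply: leq_mul size_rs _; lia.
by rewrite mulnCA; move: Hcost; move: (size _ * _) => X; lia.
Qed.
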